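(* Let $g$ be a generalized string over a finite alphabet $\Sigma$ and let $M_g=\mathrm{NFA}_\circlearrowleft(g)$. Then $\mathrm{SubsetConstruction}(M_g)$ is a minimal DFA.
   Context: For a finite alphabet $\Sigma$, the generalized alphabet is $\mathcal{G}_\Sigma=\mathcal{P}(\Sigma)\setminus\{\emptyset\}$; a generalized string $g=g[1]\cdots g[|g|]$ is a finite string over $\mathcal{G}_\Sigma$. $\mathrm{NFA}(g)=(Q,\Sigma,\Delta,Q_\alpha,F)$ with $Q=\{0,\dots,|g|\}$, $\Delta(q,\sigma)=\{q+1\}$ if $q<|g|$ and $\sigma\in g[q+1]$, and $\Delta(q,\sigma)=\emptyset$ otherwise; $Q_\alpha=\{0\}$, $F=\{|g|\}$. $\mathrm{NFA}_\circlearrowleft(g)=(Q,\Sigma,\Delta_\circlearrowleft,Q_\alpha,F)$ where $\Delta_\circlearrowleft(q,\sigma)=\{q\}\cup\Delta(q,\sigma)$ if $q\in Q_\alpha$ and $\Delta_\circlearrowleft(q,\sigma)=\Delta(q,\sigma)$ otherwise. For an NFA $(Q,\Sigma,\Delta,Q_\alpha,F)$, $\mathrm{SubsetConstruction}$ denotes the DFA whose states are the subsets $\hat\delta(Q_\alpha,s)\subseteq Q$, $s\in\Sigma^*$, with $\delta(Q',\sigma)=\bigcup_{q\in Q'}\Delta(q,\sigma)$ (extended to strings), start state $Q_\alpha$ and accepting states the subsets meeting $F$. A DFA is minimal if no DFA with fewer states recognizes the same language. *)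

From mathcomp Require Import all_boot.
Set Implicit Arguments. Unset Strict Implicit. Unset Printing Implicit Defensive.

Record dfa (Sigma : finType) := DFA {
  dstate : finType;
  dstart : dstate;
  dtrans : dstate -> Sigma -> dstate;
  dfinal : {set dstate} }.

Definition drun (Sigma : finType) (D : dfa Sigma) (q : dstate D) (w : seq Sigma) :=
  foldl (@dtrans _ D) q w.

Definition daccept (Sigma : finType) (D : dfa Sigma) (w : seq Sigma) : bool :=
  drun (dstart D) w \in dfinal D.

Definition minimal_dfa (Sigma : finType) (D : dfa Sigma) : Prop :=
  forall D' : dfa Sigma, (forall w, daccept D' w = daccept D w) ->
    #|dstate D| <= #|dstate D'|.

Record nfa (Sigma : finType) := NFA {
  nstate : finType;
  ntrans : nstate -> Sigma -> {set nstate};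
  nstart : {set nstate};
  nfinal : {set nstate} }.

Section Subset.
Variables (Sigma : finType) (N : nfa Sigma).

Definition nstep (X : {set nstate N}) (a : Sigma) : {set nstate N} :=
  \bigcup_(q in X) ntrans q a.

Definition ndeltahat (X : {set nstate N}) (w : seq Sigma) := foldl nstep X w.

Definition nstep_rel : rel {set nstate N} :=
  fun X Y => [exists a, Y == nstep X a].

Definition nreachable (X : {set nstate N}) : bool := connect nstep_rel (nstart N) X.

Lemma nreachableP X : reflect (exists w, X = ndeltahat (nstart N) w) (nreachable X).
Proof.
apply: (iffP connectP) => [[p Hp ->]|[w ->]].
  elim: p (nstart N) Hp => [|Y p IH] Z /=; first by exists [::].
  case/andP=> /existsP[a /eqP ->] /IH[w ->]; by exists (a :: w).
have H : forall Z, exists2 p, path nstep_rel Z p & ndeltahat Z w = last Z p.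
  elim: w => [|a w IH] Z /=; first by exists [::].
  have [q Hq Hl] := IH (nstep Z a).
  exists (nstep Z a :: q) => //=; rewrite Hq andbT; apply/existsP; by exists a.
exact: H.
Qed.

Definition sc_state : finType := {X : {set nstate N} | nreachable X}.

Lemma sc_start_proof : nreachable (nstart N).
Proof. exact: connect0. Qed.

Lemma sc_trans_proof (X : sc_state) (a : Sigma) : nreachable (nstep (val X) a).
Proof.
apply: connect_trans (valP X) _; apply: connect1; apply/existsP; by exists a.
Qed.

Definition subset_construction : dfa Sigma :=
  @DFA Sigma sc_state
    (exist _ (nstart N) sc_start_proof)
    (fun X a => exist _ (nstep (val X) a) (sc_trans_proof X a))
    [set X : sc_state | ~~ [disjoint val X & nfinal N]].

End Subset.

Definition gen_string (Sigma : finType) (g : seq {set Sigma}) : bool :=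
  all (fun A => A != set0) g.

(* Delta of NFA(g): q -> q+1 on sigma iff q < |g| and sigma in g[q+1]
   (g[q+1] 1-indexed = nth set0 g q 0-indexed). *)
Definition gtrans (Sigma : finType) (g : seq {set Sigma})
  (q : 'I_(size g).+1) (a : Sigma) : {set 'I_(size g).+1} :=
  if (q < size g) && (a \in nth set0 g q) then [set inord q.+1] else set0.

Definition nfa_of (Sigma : finType) (g : seq {set Sigma}) : nfa Sigma :=
  @NFA Sigma 'I_(size g).+1 (@gtrans Sigma g) [set ord0] [set ord_max].

Definition nfa_loop (Sigma : finType) (g : seq {set Sigma}) : nfa Sigma :=
  @NFA Sigma 'I_(size g).+1
    (fun q a => (if q \in [set ord0 : 'I_(size g).+1] then [set q] else set0)
                :|: @gtrans Sigma g q a)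
    [set ord0] [set ord_max].

(* Every subset reachable in the subset construction of NFA_loop(g) contains the
   start state 0, because of its self-loop.  Two distinct reachable subsets X, Y
   therefore differ in some state i > 0, say i in X but not in Y.  Since every
   letter set of g is nonempty, some word v of length |g| - i leads from i to the
   final state |g|.  From Y the word v cannot reach |g|: a token at position
   j > 0 advances by exactly one per letter, so it would have to start at i, and
   a token created at 0 reaches at most |v| < |g|.  Hence all states of the
   subset construction are reachable and pairwise distinguishable, and a
   Myhill-Nerode counting argument shows that no equivalent DFA is smaller. *)
From mathcomp Require Import all_boot.

Set Implicit Arguments.
Unset Strict Implicit.

Lemma drun_cat (Sigma : finType) (D : dfa Sigma) (q : dstate D) u v :
  drun q (u ++ v) = drun (drun q u) v.
Proof. by rewrite /drun foldl_cat. Qed.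

Lemma minimal_dfa_distinguishable (Sigma : finType) (D : dfa Sigma) :
  (forall q : dstate D, exists w, drun (dstart D) w = q) ->
  (forall p q : dstate D, p != q ->
     exists v, (drun p v \in dfinal D) != (drun q v \in dfinal D)) ->
  minimal_dfa D.
Proof.
move=> reach dist D' eqD'.
have reach_eq q : exists w, drun (dstart D) w == q.
  by have [w <-] := reach q; exists w.
pose word q := xchoose (reach_eq q).
have wordK q : drun (dstart D) (word q) = q by apply/eqP/(xchooseP (reach_eq q)).
pose f q := drun (dstart D') (word q).
have f_inj : injective f.
  move=> p q fpq; apply/eqP/negPn/negP => /dist[v].
  have := eqD' (word p ++ v); have := eqD' (word q ++ v).
  by rewrite /daccept !drun_cat !wordK -/(f p) -/(f q) fpq => -> ->; rewrite eqxx.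
by rewrite -(card_codom f_inj) max_card.
Qed.

Section SubsetConstruction.
Variables (Sigma : finType) (N : nfa Sigma).

Lemma val_drun_sc (X : dstate (subset_construction N)) v :
  val (drun X v) = ndeltahat (val X) v.
Proof. by elim: v X => [|a v IH] X //=; rewrite /drun /= -/(drun _ _) IH. Qed.

Lemma sc_reachable (X : dstate (subset_construction N)) :
  exists w, drun (dstart (subset_construction N)) w = X.
Proof.
have /nreachableP[w Xw] := valP X.
by exists w; apply: val_inj; rewrite val_drun_sc Xw.
Qed.

Lemma sc_accepting (X : dstate (subset_construction N)) v :
  (drun X v \in dfinal (subset_construction N))
  = ~~ [disjoint ndeltahat (val X) v & nfinal N].
Proof. by rewrite inE val_drun_sc. Qed.

End SubsetConstruction.

Section LoopAutomaton.
Variables (Sigma : finType) (g : seq {set Sigma}).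

Local Notation pos := 'I_(size g).+1.
Local Notation step := (nstep (N := nfa_loop g)).
Local Notation run := (ndeltahat (N := nfa_loop g)).

Lemma step_loop0 (Y : {set pos}) a : ord0 \in Y -> ord0 \in step Y a.
Proof. by move=> Y0; apply/bigcupP; exists ord0; rewrite //= !inE eqxx. Qed.

Lemma step_loopS (Y : {set pos}) a (y : pos) :
  y \in Y -> y < size g -> a \in nth set0 g y -> inord y.+1 \in step Y a.
Proof.
move=> Yy y_lt ay; apply/bigcupP; exists y => //=.
by rewrite in_setU /gtrans y_lt ay !in_set1 eqxx orbT.
Qed.

Lemma step_loopP (Y : {set pos}) a (x : pos) :
  x \in step Y a -> val x = 0 \/ exists2 y : pos, y \in Y & val x = y.+1.
Proof.
case/bigcupP => y Yy; rewrite /= in_setU; case/orP.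
  by rewrite !inE; case: eqP => [-> | _]; rewrite ?inE // => /eqP ->; left.
rewrite /gtrans; case: ifP => [/andP[y_lt _] | _]; rewrite inE // => /eqP ->.
by right; exists y; rewrite //= inordK.
Qed.

Lemma run_loop0 (Y : {set pos}) v : ord0 \in Y -> ord0 \in run Y v.
Proof. by elim: v Y => [|a v IH] Y //= /(step_loop0 a); apply: IH. Qed.

Lemma run_loop_shift (Y : {set pos}) v (k : pos) :
  size v < k -> k \in run Y v -> exists2 j : pos, j \in Y & val k = j + size v.
Proof.
elim: v Y => [|a v IH] Y /= v_lt; first by exists k; rewrite ?addn0.
case/IH => [|j]; first exact: ltnW.
case/step_loopP => [-> | [y Yy ->] ->].
  by rewrite add0n => kv; move: v_lt; rewrite kv ltnNge leqnSn.
by exists y; rewrite // addSnnS.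
Qed.

Hypothesis hg : gen_string g.

Lemma run_loop_to_final k i :
  i + k = size g -> exists2 v : seq Sigma, size v = k &
    forall (Y : {set pos}) (x : pos), val x = i -> x \in Y -> ord_max \in run Y v.
Proof.
elim: k i => [|k IH] i ik.
  exists [::] => // Y x xi; suff -> : x = ord_max by [].
  by apply: val_inj; rewrite /= xi -ik addn0.
have i_lt : i < size g by rewrite -ik addnS ltnS leq_addr.
have [a ga] : exists a, a \in nth set0 g i by apply/set0Pn/(all_nthP set0 hg).
have [v v_size vP] := IH i.+1 (etrans (addSnnS i k) ik).
exists (a :: v); first by rewrite /= v_size.
move=> Y x xi Yx; apply: (vP _ (inord i.+1)); first by rewrite /= inordK.
by rewrite -xi; apply: step_loopS; rewrite ?xi.
Qed.

Lemma run_loop_distinguish (X Y : {set pos}) (i : pos) :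
  0 < i -> i \in X -> i \notin Y ->
  exists v, (ord_max \in run X v) && (ord_max \notin run Y v).
Proof.
move=> i_gt0 Xi Yi; have i_le : i <= size g by rewrite -ltnS.
have [v v_size vP] := run_loop_to_final (subnKC i_le).
exists v; rewrite (vP X i) //=; apply/negP => /run_loop_shift[].
  by rewrite v_size /= ltn_subrL i_gt0 (leq_trans i_gt0 i_le).
move=> j Yj /= ji; suff ij : i = j by rewrite ij Yj in Yi.
by apply/val_inj/eqP; rewrite -(eqn_add2r (size v)) -ji v_size subnKC.
Qed.

Local Notation loop_dfa := (subset_construction (nfa_loop g)).

Lemma sc_loop_has0 (X : dstate loop_dfa) : ord0 \in val X.
Proof.
have [w <-] := sc_reachable X.
by rewrite val_drun_sc; apply: run_loop0; rewrite inE.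
Qed.

Lemma sc_loop_accepting (X : dstate loop_dfa) v :
  (drun X v \in dfinal loop_dfa) = (ord_max \in run (val X) v).
Proof. by rewrite sc_accepting disjoint_sym disjoints1 negbK. Qed.

Lemma sc_loop_separate (X Y : dstate loop_dfa) (i : pos) :
  i \in val X -> i \notin val Y ->
  exists v, (drun X v \in dfinal loop_dfa) != (drun Y v \in dfinal loop_dfa).
Proof.
move=> Xi Yi; have i_gt0 : 0 < i.
  rewrite lt0n; apply: contraNneq Yi => i0.
  by rewrite (_ : i = ord0) ?sc_loop_has0 //; apply: val_inj.
have [v /andP[Xv Yv]] := run_loop_distinguish i_gt0 Xi Yi.
by exists v; rewrite !sc_loop_accepting Xv (negbTE Yv).
Qed.

Lemma sc_loop_distinguishable (X Y : dstate loop_dfa) : X != Y ->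
  exists v, (drun X v \in dfinal loop_dfa) != (drun Y v \in dfinal loop_dfa).
Proof.
move=> XY; have [i] : exists i, (i \in val X) != (i \in val Y).
  apply/existsP; apply: contraNT XY => /existsPn same.
  by apply/eqP/val_inj/setP => i; apply/eqP/negPn/same.
case Xi : (i \in val X); case: (boolP (i \in val Y)) => //= Yi _.
  exact: sc_loop_separate Yi.
by have [v] := sc_loop_separate Yi (negbT Xi); exists v; rewrite eq_sym.
Qed.

End LoopAutomaton.

Theorem mainTheorem4 (Sigma : finType) (g : seq {set Sigma}) (hg : gen_string g) :
  minimal_dfa (subset_construction (nfa_loop g)).
Proof.
apply: minimal_dfa_distinguishable; first exact: sc_reachable.
exact: sc_loop_distinguishable.
Qed.
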